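(* Let $N\ge 1$, let $a_1,\dots,a_N>0$, $T_1,\dots,T_N\ge 0$ and $P_{\mathrm{tot}}>0$. For $P_i\ge 0$ let $r_i(P_i)=\log_2(1+a_iP_i)$ and $J(\mathbf P)=\sum_{i=1}^N (r_i(P_i)-T_i)^2$. Consider the problem of minimizing $J(\mathbf P)$ subject to $\sum_{i=1}^N P_i\le P_{\mathrm{tot}}$ and $P_i\ge 0$ for all $i$. Define $\bar P_i=(2^{T_i}-1)/a_i$, which is the unique power with $r_i(\bar P_i)=T_i$. Then every optimal solution $\mathbf P^*$ of this problem satisfies $P_i^*\le \bar P_i$ for all $i$. *)

(* concrete reals R. Vectors indexed by i in {0,...,N-1}
   are represented as functions nat -> R, only values at i < N matter. *)
From Stdlib Require Import Reals Lra.
Open Scope R_scope.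

Definition log2 (x : R) : R := ln x / ln 2.

Definition rate (a p : R) : R := log2 (1 + a * p).

Definition J (N : nat) (a T P : nat -> R) : R :=
  sum_f_R0 (fun i => (rate (a i) (P i) - T i) ^ 2) (N - 1).

Definition feasible (N : nat) (Ptot : R) (P : nat -> R) : Prop :=
  (forall i, (i < N)%nat -> 0 <= P i) /\
  sum_f_R0 P (N - 1) <= Ptot.

Definition optimal (N : nat) (a T : nat -> R) (Ptot : R) (P : nat -> R) : Prop :=
  feasible N Ptot P /\
  forall Q, feasible N Ptot Q -> J N a T P <= J N a T Q.

Definition Pbar (a T : R) : R := (Rpower 2 T - 1) / a.

(* Suppose Q is optimal but Q_i > Pbar_i.  Lowering the i-th power to Pbar_i
   keeps the allocation feasible and, since r_i(Pbar_i) = T_i, sets the i-th term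
   of J to zero while leaving the other terms unchanged.  As r_i is strictly
   increasing, the i-th term of J(Q) was positive, so J strictly decreases. *)

From Stdlib Require Import Reals.
From Stdlib Require Import Lra Lia.
Open Scope R_scope.

Definition update (f : nat -> R) (i : nat) (v : R) : nat -> R :=
  fun j => if Nat.eqb j i then v else f j.

Lemma update_eq (f : nat -> R) (i : nat) (v : R) : update f i v i = v.
Proof. unfold update. now rewrite Nat.eqb_refl. Qed.

Lemma update_neq (f : nat -> R) (i j : nat) (v : R) :
  j <> i -> update f i v j = f j.
Proof. intros Hji. unfold update. now rewrite (proj2 (Nat.eqb_neq j i) Hji). Qed.

Lemma sum_f_R0_eq_except (f g : nat -> R) (i n : nat) :
  (i <= n)%nat -> (forall j, j <> i -> g j = f j) ->
  sum_f_R0 g n = sum_f_R0 f n + (g i - f i).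
Proof.
  intros Hin Hfg. induction n as [|n IH]; simpl.
  - replace i with 0%nat by lia. lra.
  - destruct (Nat.eq_dec i (S n)) as [->|Hi].
    + rewrite (sum_eq g f n) by (intros j Hj; apply Hfg; lia). lra.
    + rewrite IH by lia. rewrite (Hfg (S n)) by lia. lra.
Qed.

Lemma sum_f_R0_update (f : nat -> R) (i n : nat) (v : R) :
  (i <= n)%nat -> sum_f_R0 (update f i v) n = sum_f_R0 f n + (v - f i).
Proof.
  intros Hin. rewrite (sum_f_R0_eq_except f (update f i v) i n Hin).
  - now rewrite update_eq.
  - intros j Hj. now apply update_neq.
Qed.

Lemma ln2_pos : 0 < ln 2.
Proof. rewrite <- ln_1. apply ln_increasing; lra. Qed.

Lemma rate_lt_compat (a p q : R) :
  0 < a -> 0 <= p -> p < q -> rate a p < rate a q.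
Proof.
  intros Ha Hp Hpq. unfold rate, log2, Rdiv.
  apply Rmult_lt_compat_r; [apply Rinv_0_lt_compat, ln2_pos |].
  apply ln_increasing.
  - assert (0 <= a * p) by (apply Rmult_le_pos; lra). lra.
  - apply Rplus_lt_compat_l, Rmult_lt_compat_l; assumption.
Qed.

Lemma rate_Pbar (a T : R) : 0 < a -> rate a (Pbar a T) = T.
Proof.
  intros Ha. pose proof ln2_pos.
  unfold rate, log2, Pbar.
  replace (1 + a * ((Rpower 2 T - 1) / a)) with (Rpower 2 T) by (field; lra).
  rewrite ln_Rpower. field. lra.
Qed.

Lemma Pbar_nonneg (a T : R) : 0 < a -> 0 <= T -> 0 <= Pbar a T.
Proof.
  intros Ha HT. unfold Pbar.
  assert (1 <= Rpower 2 T).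
  { rewrite <- (Rpower_O 2) by lra. apply Rle_Rpower; lra. }
  apply Rmult_le_pos; [lra |]. left. now apply Rinv_0_lt_compat.
Qed.

Lemma feasible_update_le (N : nat) (Ptot : R) (P : nat -> R) (i : nat) (v : R) :
  (i < N)%nat -> 0 <= v <= P i ->
  feasible N Ptot P -> feasible N Ptot (update P i v).
Proof.
  intros Hi Hv [Hnn Hsum]. split.
  - intros j Hj. destruct (Nat.eq_dec j i) as [->|Hji].
    + rewrite update_eq. lra.
    + rewrite update_neq by assumption. now apply Hnn.
  - rewrite sum_f_R0_update by lia. lra.
Qed.

Lemma J_update (N : nat) (a T P : nat -> R) (i : nat) (v : R) :
  (i < N)%nat ->
  J N a T (update P i v) =
  J N a T P + ((rate (a i) v - T i) ^ 2 - (rate (a i) (P i) - T i) ^ 2).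
Proof.
  intros Hi. unfold J.
  rewrite (sum_f_R0_eq_except (fun j => (rate (a j) (P j) - T j) ^ 2) _ i).
  - now rewrite update_eq.
  - lia.
  - intros j Hj. now rewrite update_neq.
Qed.

Theorem proposition1 (N : nat) (a T : nat -> R) (Ptot : R) (Pstar : nat -> R) :
  (1 <= N)%nat ->
  (forall i, (i < N)%nat -> 0 < a i) ->
  (forall i, (i < N)%nat -> 0 <= T i) ->
  0 < Ptot ->
  optimal N a T Ptot Pstar ->
  forall i, (i < N)%nat -> Pstar i <= Pbar (a i) (T i).
Proof.
  intros _ Ha HT _ [Hfeas Hopt] i Hi.
  apply Rnot_lt_le. intros Hgt.
  pose proof (Ha i Hi) as Hai.
  pose proof (Pbar_nonneg (a i) (T i) Hai (HT i Hi)) as HPbar.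
  set (Q := update Pstar i (Pbar (a i) (T i))).
  assert (HQ : feasible N Ptot Q) by (apply feasible_update_le; auto; lra).
  assert (Hrate : T i < rate (a i) (Pstar i)).
  { rewrite <- (rate_Pbar (a i) (T i) Hai) at 1. now apply rate_lt_compat. }
  assert (Hterm : 0 < (rate (a i) (Pstar i) - T i) ^ 2) by (apply pow_lt; lra).
  specialize (Hopt Q HQ).
  unfold Q in Hopt. rewrite J_update, rate_Pbar in Hopt by assumption.
  lra.
Qed.
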